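(* For integers $m\ge1$ and $d\ge0$ define $$e(m,d)=2^{3-2m-d}\sum_{i=1}^{\lfloor (m+1)/2\rfloor} i\binom{2m+d+2}{m+d+2i+1}.$$ Then $e(m,d+1)<\frac{2m+d+3}{2m+2d+4}\,e(m,d)$ for all $d\ge 0$, and for each fixed $m\ge1$, $\lim_{d\to\infty}e(m,d)=0$.
   Context: $\binom{a}{b}=\frac{a!}{b!(a-b)!}$ for integers $0\le b\le a$. *)

From Stdlib Require Import Reals List Arith ZArith.
Open Scope R_scope.

Definition e (m d : nat) : R :=
  powerRZ 2 (3 - 2 * Z.of_nat m - Z.of_nat d)%Z *
  fold_right Rplus 0
    (map (fun i : nat => INR i * Binomial.C (2 * m + d + 2)%nat (m + d + 2 * i + 1)%nat)
         (seq 1 ((m + 1) / 2)%nat)).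

From Stdlib Require Import Reals List Arith ZArith.
From Stdlib Require Import Lra Lia.
Open Scope R_scope.

(* Write e(m,d) = 2^(3-2m-d) * S(m,d), where S(m,d) is the sum of
   the terms t_i(d) = i * C(2m+d+2, m+d+2i+1), 1 <= i <= (m+1)/2.
   Pascal's absorption identity C(n+1,k+1) = (n+1)/(k+1) * C(n,k) gives
   t_i(d+1) = (2m+d+3)/(m+d+2i+2) * t_i(d), and since i >= 1 the denominator
   exceeds (2m+2d+4)/2, so t_i(d+1) < 2 * (2m+d+3)/(2m+2d+4) * t_i(d).
   Summing over i (there is at least one term since m >= 1) and absorbing the
   factor 2 into the power 2^(-d) yields the strict recursive inequality.
   For d >= m the ratio (2m+d+3)/(2m+2d+4) is at most 3/4, so the nonnegative
   sequence e(m,.) eventually decays at least geometrically and tends to 0.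
   The file first proves the general facts (binomial ratio, sums of lists,
   geometric decay), then the two properties of e, then the theorem. *)

Lemma binomial_succ (n k : nat) :
  Binomial.C (S n) (S k) = INR (S n) / INR (S k) * Binomial.C n k.
Proof.
  unfold Binomial.C.
  change (Factorial.fact (S n)) with (S n * Factorial.fact n)%nat.
  change (Factorial.fact (S k)) with (S k * Factorial.fact k)%nat.
  change (S n - S k)%nat with (n - k)%nat.
  rewrite !mult_INR.
  assert (INR (S k) <> 0) by (apply not_0_INR; lia).
  pose proof (INR_fact_neq_0 n); pose proof (INR_fact_neq_0 k);
    pose proof (INR_fact_neq_0 (n - k)).
  field; auto.
Qed.

(* The real-valued binomial of the standard library is always positive
   (for k > n it is a quotient of factorials, not zero). *)
Lemma binomial_pos (n k : nat) : 0 < Binomial.C n k.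
Proof.
  unfold Binomial.C.
  pose proof (INR_fact_lt_0 n); pose proof (INR_fact_lt_0 k);
    pose proof (INR_fact_lt_0 (n - k)).
  apply Rdiv_lt_0_compat; [|apply Rmult_lt_0_compat]; auto.
Qed.

Lemma binomial_succ_lt (n k b : nat) :
  (0 < b)%nat -> (b < 2 * S k)%nat ->
  Binomial.C (S n) (S k) < 2 * INR (S n) / INR b * Binomial.C n k.
Proof.
  intros Hb Hbk.
  rewrite binomial_succ.
  apply Rmult_lt_compat_r; [apply binomial_pos|].
  assert (hb : 0 < INR b) by (apply lt_0_INR; lia).
  assert (hk : INR b < 2 * INR (S k)).
  { replace 2 with (INR 2) by reflexivity. rewrite <- mult_INR. apply lt_INR; lia. }
  assert (hn : 0 < INR (S n)) by (apply lt_0_INR; lia).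
  apply (Rmult_lt_reg_r (INR b * INR (S k))); [nra|].
  field_simplify; [nra | lra | lra].
Qed.

Lemma sum_list_lt (a b : nat -> R) (c : R) (l : list nat) :
  l <> nil -> (forall x, In x l -> a x < c * b x) ->
  fold_right Rplus 0 (map a l) < c * fold_right Rplus 0 (map b l).
Proof.
  induction l as [|x [|y l'] IH]; intros Hne H; [congruence| |].
  - simpl. specialize (H x (or_introl eq_refl)). lra.
  - assert (Hx := H x (or_introl eq_refl)).
    assert (Htail : fold_right Rplus 0 (map a (y :: l'))
                    < c * fold_right Rplus 0 (map b (y :: l'))).
    { apply IH; [congruence|]. intros z Hz. apply H. right; exact Hz. }
    simpl in *. lra.
Qed.

Lemma sum_list_nonneg (a : nat -> R) (l : list nat) :
  (forall x, In x l -> 0 < a x) -> 0 <= fold_right Rplus 0 (map a l).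
Proof.
  induction l as [|x l IH]; intros H; simpl; [lra|].
  assert (0 < a x) by (apply H; left; reflexivity).
  assert (0 <= fold_right Rplus 0 (map a l)) by (apply IH; intros; apply H; right; auto).
  lra.
Qed.

Lemma eventually_contracting_cv0 (u : nat -> R) (q : R) (N : nat) :
  0 <= q < 1 ->
  (forall n, (N <= n)%nat -> 0 <= u n /\ u (S n) <= q * u n) ->
  Un_cv u 0.
Proof.
  intros Hq Hu.
  assert (Hgeom : forall j, u (N + j)%nat <= q ^ j * u N).
  { induction j as [|j IH].
    - rewrite Nat.add_0_r. simpl. lra.
    - replace (N + S j)%nat with (S (N + j)) by lia.
      destruct (Hu (N + j)%nat ltac:(lia)) as [_ Hstep].
      simpl. assert (0 <= q) by lra. nra. }
  intros eps Heps.
  destruct (Hu N (le_n N)) as [HuN _].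
  destruct (pow_lt_1_zero q ltac:(rewrite Rabs_right; lra) (eps / (u N + 1)))
    as [J HJ]; [apply Rdiv_lt_0_compat; lra|].
  exists (N + J)%nat. intros n Hn.
  unfold Rdist. rewrite Rminus_0_r.
  replace n with (N + (n - N))%nat by lia.
  destruct (Hu (N + (n - N))%nat ltac:(lia)) as [Hun _].
  rewrite Rabs_right by lra.
  assert (Hsmall := HJ (n - N)%nat ltac:(lia)).
  assert (Hpow : 0 <= q ^ (n - N)) by (apply pow_le; lra).
  rewrite Rabs_right in Hsmall by lra.
  assert (Hsmall' : q ^ (n - N) * (u N + 1) < eps).
  { apply (Rmult_lt_compat_r (u N + 1)) in Hsmall; [|lra].
    replace (eps / (u N + 1) * (u N + 1)) with eps in Hsmall by (field; lra).
    exact Hsmall. }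
  pose proof (Hgeom (n - N)%nat). nra.
Qed.

Definition eterm (m d i : nat) : R :=
  INR i * Binomial.C (2 * m + d + 2)%nat (m + d + 2 * i + 1)%nat.

Definition eindices (m : nat) : list nat := seq 1 ((m + 1) / 2).

Lemma e_unfold (m d : nat) :
  e m d = powerRZ 2 (3 - 2 * Z.of_nat m - Z.of_nat d)%Z *
          fold_right Rplus 0 (map (eterm m d) (eindices m)).
Proof. reflexivity. Qed.

Lemma eindices_nonempty (m : nat) : (1 <= m)%nat -> eindices m <> nil.
Proof.
  intros Hm. unfold eindices.
  assert (H1 : (1 <= (m + 1) / 2)%nat) by (apply Nat.div_le_lower_bound; lia).
  destruct ((m + 1) / 2)%nat; [lia | discriminate].
Qed.

(* Each summand shrinks by more than the factor 2(2m+d+3)/(2m+2d+4) when d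
   increases, because its lower binomial index is m+d+2i+1 with i >= 1. *)
Lemma eterm_step (m d i : nat) : (1 <= i)%nat ->
  eterm m (S d) i < 2 * INR (2 * m + d + 3) / INR (2 * m + 2 * d + 4) * eterm m d i.
Proof.
  intros Hi. unfold eterm.
  replace (2 * m + S d + 2)%nat with (S (2 * m + d + 2)) by lia.
  replace (m + S d + 2 * i + 1)%nat with (S (m + d + 2 * i + 1)) by lia.
  replace (2 * m + d + 3)%nat with (S (2 * m + d + 2)) by lia.
  assert (Hi' : 0 < INR i) by (apply lt_0_INR; lia).
  pose proof (binomial_succ_lt (2 * m + d + 2) (m + d + 2 * i + 1)
                (2 * m + 2 * d + 4) ltac:(lia) ltac:(lia)).
  nra.
Qed.

Lemma e_nonneg (m d : nat) : 0 <= e m d.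
Proof.
  rewrite e_unfold. apply Rmult_le_pos; [left; apply powerRZ_lt; lra|].
  apply sum_list_nonneg. intros i Hi. unfold eindices in Hi. apply in_seq in Hi.
  unfold eterm. apply Rmult_lt_0_compat; [apply lt_0_INR; lia | apply binomial_pos].
Qed.

Lemma powerRZ_two_step (m d : nat) :
  powerRZ 2 (3 - 2 * Z.of_nat m - Z.of_nat (S d))%Z =
  powerRZ 2 (3 - 2 * Z.of_nat m - Z.of_nat d)%Z / 2.
Proof.
  rewrite Nat2Z.inj_succ.
  replace (3 - 2 * Z.of_nat m - Z.succ (Z.of_nat d))%Z
    with ((3 - 2 * Z.of_nat m - Z.of_nat d) + (-1))%Z by lia.
  rewrite powerRZ_add by lra. simpl. field.
Qed.

Lemma e_step (m d : nat) : (1 <= m)%nat ->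
  e m (S d) < INR (2 * m + d + 3) / INR (2 * m + 2 * d + 4) * e m d.
Proof.
  intros Hm. rewrite !e_unfold, powerRZ_two_step.
  set (P := powerRZ 2 (3 - 2 * Z.of_nat m - Z.of_nat d)%Z).
  set (r := INR (2 * m + d + 3) / INR (2 * m + 2 * d + 4)).
  assert (hP : 0 < P) by (apply powerRZ_lt; lra).
  assert (Hsum : fold_right Rplus 0 (map (eterm m (S d)) (eindices m))
                 < 2 * r * fold_right Rplus 0 (map (eterm m d) (eindices m))).
  { apply sum_list_lt; [apply eindices_nonempty; exact Hm|].
    intros i Hi. unfold eindices in Hi. apply in_seq in Hi.
    unfold r, Rdiv. rewrite <- Rmult_assoc. apply eterm_step. lia. }
  apply (Rmult_lt_compat_l (P / 2)) in Hsum; [|lra].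
  replace (r * (P * fold_right Rplus 0 (map (eterm m d) (eindices m))))
    with (P / 2 * (2 * r * fold_right Rplus 0 (map (eterm m d) (eindices m))))
    by field.
  exact Hsum.
Qed.

Lemma ratio_le_three_quarters (m d : nat) : (m <= d)%nat ->
  INR (2 * m + d + 3) / INR (2 * m + 2 * d + 4) <= 3 / 4.
Proof.
  intros H.
  assert (hb : 0 < INR (2 * m + 2 * d + 4)) by (apply lt_0_INR; lia).
  assert (h : 4 * INR (2 * m + d + 3) <= 3 * INR (2 * m + 2 * d + 4)).
  { replace 4 with (INR 4) by (simpl; lra). replace 3 with (INR 3) by (simpl; lra).
    rewrite <- !mult_INR. apply le_INR. lia. }
  apply (Rmult_le_reg_r (INR (2 * m + 2 * d + 4))); [exact hb|].
  unfold Rdiv. rewrite Rmult_assoc, Rinv_l by lra. lra.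
Qed.

Theorem mainTheorem11 (m : nat) (hm : (1 <= m)%nat) :
  (forall d : nat,
      e m (S d) < INR (2 * m + d + 3) / INR (2 * m + 2 * d + 4) * e m d) /\
  Un_cv (fun d : nat => e m d) 0.
Proof.
  split.
  - intros d. exact (e_step m d hm).
  - apply (eventually_contracting_cv0 _ (3 / 4) m); [lra|].
    intros d Hd. split; [apply e_nonneg|].
    pose proof (e_step m d hm). pose proof (e_nonneg m d).
    pose proof (ratio_le_three_quarters m d Hd).
    nra.
Qed.
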